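(* Let $\mathcal{X}_1,\mathcal{X}_2$ be non-empty sets, $\mathcal{B}_i\subseteq\mathcal{P}(\mathcal{X}_i)\setminus\{\emptyset\}$, and $\underline{P}_i$ a coherent conditional lower prevision on $\mathcal{C}_i\subseteq\mathcal{C}(\mathcal{X}_i)$ with natural extension $\underline{E}_i$ to $\mathcal{C}(\mathcal{X}_i)$, for $i\in\{1,2\}$. Let $\{i,j\}=\{1,2\}$. Then for any $f_i\in\mathcal{G}(\mathcal{X}_i)$, any non-empty $B_i\subseteq\mathcal{X}_i$ and any $B_j\in\mathcal{B}_j$, $$(\underline{P}_1\otimes\underline{P}_2)(f_i\vert B_i\cap B_j)=(\underline{P}_1\otimes\underline{P}_2)(f_i\vert B_i)=\underline{E}_i(f_i\vert B_i).$$
   Context: Gambles on a non-empty set $\mathcal{X}$ are bounded real functions; $\mathcal{G}(\mathcal{X})$ is the set of gambles, $\mathcal{G}_{>0}(\mathcal{X})$ the non-negative non-zero gambles, $\mathbb{I}_A$ the indicator of $A$. For $\mathcal{A}\subseteq\mathcal{G}(\mathcal{X})$: $\mathrm{posi}(\mathcal{A}):=\{\sum_{i=1}^n\lambda_if_i\colon n\in\mathbb{N},\lambda_i>0,f_i\in\mathcal{A}\}$, $\mathcal{E}(\mathcal{A}):=\mathrm{posi}(\mathcal{A}\cup\mathcal{G}_{>0}(\mathcal{X}))$. A coherent set of desirable gambles $\mathcal{D}\subseteq\mathcal{G}(\mathcal{X})$ satisfies: (D1) $f\geq0,f\neq0\Rightarrow f\in\mathcal{D}$; (D2) $f\in\mathcal{D},\lambda>0\Rightarrow\lambda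 f\in\mathcal{D}$; (D3) $f,g\in\mathcal{D}\Rightarrow f+g\in\mathcal{D}$; (D4) $f\leq0\Rightarrow f\notin\mathcal{D}$. $\mathcal{C}(\mathcal{X}):=\mathcal{G}(\mathcal{X})\times(\mathcal{P}(\mathcal{X})\setminus\{\emptyset\})$; a conditional lower prevision on $\mathcal{C}\subseteq\mathcal{C}(\mathcal{X})$ is a map $(f,B)\mapsto\underline{P}(f\vert B)\in\mathbb{R}\cup\{\pm\infty\}$. For $\mathcal{D}\subseteq\mathcal{G}(\mathcal{X})$, $\underline{P}_{\mathcal{D}}(f\vert B):=\sup\{\mu\in\mathbb{R}\colon[f-\mu]\mathbb{I}_B\in\mathcal{D}\}$. $\underline{P}$ is coherent if $\underline{P}=\underline{P}_{\mathcal{D}}$ on its domain for some coherent set of desirable gambles $\mathcal{D}$. For coherent $\underline{P}$ on $\mathcal{C}$, $\mathcal{E}(\underline{P}):=\mathcal{E}(\{[f-\mu]\mathbb{I}_B\colon(f,B)\in\mathcal{C},\mu<\underline{P}(f\vert B)\})$ and its natural extension is $\underline{E}(f\vert B):=\underline{P}_{\mathcal{E}(\underline{P})}(f\vert B)$, $(f,B)\in\mathcal{C}(\mathcal{X})$. Gambles on $\mathcal{X}_i$ are identified with their cylindrical extensions to $\mathcal{X}_1\times\mathcal{X}_2$, events $B\subseteq\mathcal{X}_1$ with $B\times\mathcal{X}_2$ and $B\subseteq\mathcal{X}_2$ with $\mathcal{X}_1\times B$ (so $B_i\cap B_j$ is a rectangle in $\mathcal{X}_1\times\mathcal{X}_2$).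 For coherent sets of desirable gambles $\mathcal{D}_1,\mathcal{D}_2$: $\mathcal{D}_1\otimes\mathcal{D}_2:=\mathcal{E}(\mathcal{A}_{1\to2}\cup\mathcal{A}_{2\to1})$, $\mathcal{A}_{1\to2}:=\{f_2(X_2)\mathbb{I}_{B_1}(X_1)\colon f_2\in\mathcal{D}_2,B_1\in\mathcal{B}_1\cup\{\mathcal{X}_1\}\}$, $\mathcal{A}_{2\to1}:=\{f_1(X_1)\mathbb{I}_{B_2}(X_2)\colon f_1\in\mathcal{D}_1,B_2\in\mathcal{B}_2\cup\{\mathcal{X}_2\}\}$. Then $(\underline{P}_1\otimes\underline{P}_2)(f\vert B):=\underline{P}_{\mathcal{D}}(f\vert B)$ for $(f,B)\in\mathcal{C}(\mathcal{X}_1\times\mathcal{X}_2)$ with $\mathcal{D}=\mathcal{E}(\underline{P}_1)\otimes\mathcal{E}(\underline{P}_2)$. *)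

From Stdlib Require Import Reals List Classical ClassicalDescription.
From Coquelicot Require Import Rbar Lub.
Open Scope R_scope.

Definition gamble {X : Type} (f : X -> R) : Prop :=
  exists M : R, forall x, Rabs (f x) <= M.

Definition gset (X : Type) := (X -> R) -> Prop.

Definition ind {X : Type} (B : X -> Prop) (x : X) : R :=
  if excluded_middle_informative (B x) then 1 else 0.

Definition Gpos {X : Type} : gset X :=
  fun f => gamble f /\ (forall x, 0 <= f x) /\ exists x, f x <> 0.

Definition posi {X : Type} (A : gset X) : gset X :=
  fun g => exists l : list (R * (X -> R)),
    l <> nil /\
    Forall (fun p => 0 < fst p /\ A (snd p)) l /\
    forall x, g x = fold_right (fun p acc => fst p * snd p x + acc) 0 l.

Definition Eext {X : Type} (A : gset X) : gset X :=
  posi (fun f => A f \/ Gpos f).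

Definition coherent_D {X : Type} (D : gset X) : Prop :=
  (forall f, D f -> gamble f) /\
  (forall f, gamble f -> (forall x, 0 <= f x) -> (exists x, f x <> 0) -> D f) /\
  (forall f lam, D f -> 0 < lam -> D (fun x => lam * f x)) /\
  (forall f g, D f -> D g -> D (fun x => f x + g x)) /\
  (forall f, (forall x, f x <= 0) -> ~ D f).

Definition LP_D {X : Type} (D : gset X) (f : X -> R) (B : X -> Prop) : Rbar :=
  Lub_Rbar (fun mu => D (fun x => (f x - mu) * ind B x)).

Definition domain (X : Type) := (X -> R) -> (X -> Prop) -> Prop.
Definition lprev (X : Type) := (X -> R) -> (X -> Prop) -> Rbar.

Definition in_CX {X : Type} (C : domain X) : Prop :=
  forall f B, C f B -> gamble f /\ exists x, B x.

Definition coherent_P {X : Type} (C : domain X) (P : lprev X) : Prop :=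
  exists D : gset X, coherent_D D /\ forall f B, C f B -> P f B = LP_D D f B.

Definition EP {X : Type} (C : domain X) (P : lprev X) : gset X :=
  Eext (fun g => exists f B mu, C f B /\ Rbar_lt (Finite mu) (P f B) /\
                   forall x, g x = (f x - mu) * ind B x).

Definition natext {X : Type} (C : domain X) (P : lprev X) : lprev X :=
  fun f B => LP_D (EP C P) f B.

Definition prodD {X1 X2 : Type} (Bs1 : (X1 -> Prop) -> Prop) (Bs2 : (X2 -> Prop) -> Prop)
  (D1 : gset X1) (D2 : gset X2) : gset (X1 * X2) :=
  Eext (fun g =>
    (exists f2 B1, D2 f2 /\ (Bs1 B1 \/ forall x, B1 x) /\
        forall z, g z = f2 (snd z) * ind B1 (fst z)) \/
    (exists f1 B2, D1 f1 /\ (Bs2 B2 \/ forall y, B2 y) /\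
        forall z, g z = f1 (fst z) * ind B2 (snd z))).

Definition prodP {X1 X2 : Type} (Bs1 : (X1 -> Prop) -> Prop) (Bs2 : (X2 -> Prop) -> Prop)
  (C1 : domain X1) (P1 : lprev X1) (C2 : domain X2) (P2 : lprev X2) : lprev (X1 * X2) :=
  fun f B => LP_D (prodD Bs1 Bs2 (EP C1 P1) (EP C2 P2)) f B.

From Stdlib Require Import Reals Lra Lia List Classical ClassicalDescription.
From Stdlib Require Import FunctionalExtensionality PropExtensionality.
From Stdlib Require ClassicalEpsilon.
From Coquelicot Require Import Rbar Lub.
Import ListNotations.
Open Scope R_scope.

(* If [h(x1) I_E(x2)] lies in [D1 ⊗ D2] but [h] is not in [D1], then adding [-h] to [D1]
   keeps it free of nonpositive combinations, and rewriting [h I_E] as a combination of the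
   generators of [D1 ⊗ D2] exhibits a nonpositive sum
     [Σ_k f_k(x2) I_{A_k}(x1) + Σ_l g_l(x1) I_{C_l}(x2)]
   with [f_k] in [D2], [g_l] in [D1 ∪ {-h}] and nonempty events, the term [-h I_E] among
   them. No such nonempty sum exists: grouping the points of each factor by the events
   containing them gives finitely many blocks; on each block a constant [m r c] separates
   the two sums, and the minimax theorem for the matrix [m] yields a nonnegative nonzero
   combination of the [f_k], or of the [g_l], that is nonpositive everywhere.
   Hence [h I_E ∈ D1 ⊗ D2 <-> h ∈ D1], so both sides of each equation are suprema
   over the same set of [mu]. *)

Definition comb {X : Type} (l : list (R * (X -> R))) (x : X) : R :=
  fold_right (fun p acc => fst p * snd p x + acc) 0 l.

Lemma comb_app {X} (l1 l2 : list (R * (X -> R))) x : comb (l1 ++ l2) x = comb l1 x + comb l2 x.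
Proof. induction l1 as [|p l1 IH]; unfold comb in *; cbn; [ring|]. rewrite IH; ring. Qed.

Lemma comb_scale {X} lam (l : list (R * (X -> R))) x :
  comb (map (fun p => (lam * fst p, snd p)) l) x = lam * comb l x.
Proof. induction l as [|p l IH]; unfold comb in *; cbn; [ring|]. rewrite IH; ring. Qed.

Lemma posi_scale_incl {X} (A : gset X) f lam : A f -> 0 < lam -> posi A (fun x => lam * f x).
Proof.
  intros Hf Hlam. exists [(lam, f)]. split; [discriminate|]. split.
  - constructor; [split; assumption|constructor].
  - intros x; cbn; ring.
Qed.

Lemma posi_incl {X} (A : gset X) f : A f -> posi A f.
Proof.
  intros Hf. exists [(1, f)]. split; [discriminate|]. split.
  - constructor; [split; [cbn; lra|exact Hf]|constructor].
  - intros x; cbn; ring.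
Qed.

Definition cone {X : Type} (K : gset X) : Prop :=
  (forall f lam, K f -> 0 < lam -> K (fun x => lam * f x)) /\
  (forall f g, K f -> K g -> K (fun x => f x + g x)).

Definition no_nonpos {X : Type} (K : gset X) : Prop :=
  forall f, K f -> ~ (forall x, f x <= 0).

Lemma cone_posi {X} (A : gset X) : cone (posi A).
Proof.
  split.
  - intros f lam [l [Hne [HA Hf]]] Hlam.
    exists (map (fun p => (lam * fst p, snd p)) l). split; [|split].
    + now destruct l.
    + apply Forall_map. eapply Forall_impl; [|exact HA].
      intros p [Hp HAp]; split; [apply Rmult_lt_0_compat|]; assumption.
    + intros x. change (lam * f x = comb (map (fun p => (lam * fst p, snd p)) l) x).
      rewrite comb_scale, Hf. reflexivity.
  - intros f g [l1 [Hne1 [HA1 Hf]]] [l2 [_ [HA2 Hg]]]. exists (l1 ++ l2). split; [|split].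
    + now destruct l1.
    + now apply Forall_app.
    + intros x. change (f x + g x = comb (l1 ++ l2) x). rewrite comb_app, Hf, Hg. reflexivity.
Qed.

Lemma posi_ind {X} (A : gset X) (P : (X -> R) -> Prop) :
  (forall f lam, A f -> 0 < lam -> P (fun x => lam * f x)) ->
  (forall f g, P f -> P g -> P (fun x => f x + g x)) ->
  forall g, posi A g -> P g.
Proof.
  intros Hgen Hadd g [l [Hne [HA Hg]]].
  replace g with (comb l) by (symmetry; apply functional_extensionality, Hg).
  clear g Hg. induction HA as [|[lam f] l [Hlam Hf] HA IH]; [congruence|].
  cbn in Hlam, Hf. destruct l as [|q l].
  - replace (comb [(lam, f)]) with (fun x => lam * f x); [now apply Hgen|].
    apply functional_extensionality; intros x; cbn; ring.
  - apply (Hadd _ _ (Hgen f lam Hf Hlam) (IH ltac:(discriminate))).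
Qed.

Lemma cone_posi_incl {X} (K : gset X) : cone K -> forall g, posi K g -> K g.
Proof. intros [Hscale Hadd]. apply posi_ind; assumption. Qed.

Lemma posi_mono {X} (A A' : gset X) : (forall f, A f -> A' f) -> forall g, posi A g -> posi A' g.
Proof.
  intros HAA'. apply posi_ind; [|apply cone_posi].
  intros f lam Hf Hlam. apply posi_scale_incl; auto.
Qed.

Lemma posi_posi {X} (A : gset X) g : posi (posi A) g -> posi A g.
Proof. apply cone_posi_incl, cone_posi. Qed.

Lemma posi_nonpos_at {X} (A : gset X) x g :
  (forall f, A f -> f x <= 0) -> posi A g -> g x <= 0.
Proof.
  intros HA. revert g. apply (posi_ind A (fun g => g x <= 0)).
  - intros f lam Hf Hlam. specialize (HA f Hf). nra.
  - intros f g Hf Hg. lra.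
Qed.

(** * A theorem of alternatives *)

Fixpoint psum (n : nat) (f : nat -> R) : R :=
  match n with O => 0 | S k => psum k f + f k end.

Lemma psum_ext n f g : (forall j, (j < n)%nat -> f j = g j) -> psum n f = psum n g.
Proof.
  induction n as [|n IH]; intros H; cbn; [reflexivity|].
  rewrite IH by (intros; apply H; lia). rewrite H by lia. reflexivity.
Qed.

Lemma psum_le n f g : (forall j, (j < n)%nat -> f j <= g j) -> psum n f <= psum n g.
Proof.
  induction n as [|n IH]; intros H; cbn; [lra|].
  apply Rplus_le_compat; [apply IH; intros; apply H|apply H]; lia.
Qed.

Lemma psum_lin n a b f g :
  psum n (fun j => a * f j + b * g j) = a * psum n f + b * psum n g.
Proof. induction n as [|n IH]; cbn; [ring|]. rewrite IH; ring. Qed.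

Lemma psum_opp n f : psum n (fun j => - f j) = - psum n f.
Proof. induction n as [|n IH]; cbn; [ring|]. rewrite IH; ring. Qed.

Lemma psum_zero n : psum n (fun _ => 0) = 0.
Proof. induction n as [|n IH]; cbn; [reflexivity|]. rewrite IH; ring. Qed.

Lemma psum_extend n (r u : nat -> R) t :
  psum (S n) (fun j => r j * (if Nat.ltb j n then u j else t))
  = psum n (fun j => r j * u j) + r n * t.
Proof.
  cbn [psum]. rewrite Nat.ltb_irrefl. f_equal. apply psum_ext.
  intros j Hj. now rewrite (proj2 (Nat.ltb_lt j n) Hj).
Qed.

Lemma fold_Rmax_nonneg l : 0 <= fold_right Rmax 0 l.
Proof. induction l as [|x l IH]; cbn; [lra|]. eapply Rle_trans; [exact IH|apply Rmax_r]. Qed.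

Lemma fold_Rmax_ub l x : In x l -> x <= fold_right Rmax 0 l.
Proof.
  induction l as [|y l IH]; cbn; [tauto|]. intros [<-|Hx]; [apply Rmax_l|].
  eapply Rle_trans; [exact (IH Hx)|apply Rmax_r].
Qed.

Lemma fold_Rmax_lub l M : 0 <= M -> (forall x, In x l -> x <= M) -> fold_right Rmax 0 l <= M.
Proof. induction l as [|y l IH]; cbn; intros H0 H; [lra|]. apply Rmax_lub; auto. Qed.

Lemma In_filter_dec {T} (P : T -> Prop) (dec : forall x, {P x} + {~ P x}) l x :
  In x (filter (fun y => if dec y then true else false) l) <-> In x l /\ P x.
Proof. rewrite filter_In. destruct (dec x); intuition congruence. Qed.

(* Fourier-Motzkin elimination of coordinate [n]. *)
Definition eliminate (n : nat) (rows : list (nat -> R)) : list (nat -> R) :=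
  filter (fun r => if Rle_dec (r n) 0 then true else false) rows ++
  flat_map (fun p => map (fun q j => - q n * p j + p n * q j)
                         (filter (fun q => if Rlt_dec (q n) 0 then true else false) rows))
           (filter (fun p => if Rlt_dec 0 (p n) then true else false) rows).

Lemma In_eliminate n rows v :
  In v (eliminate n rows) <->
  (In v rows /\ v n <= 0) \/
  exists p q, (In p rows /\ 0 < p n) /\ (In q rows /\ q n < 0) /\
              v = (fun j => - q n * p j + p n * q j).
Proof.
  unfold eliminate. rewrite in_app_iff, In_filter_dec, in_flat_map.
  setoid_rewrite In_filter_dec. setoid_rewrite in_map_iff. setoid_rewrite In_filter_dec.
  firstorder.
Qed.

Lemma eliminate_posi n rows v :
  In v (eliminate n rows) -> posi (fun r => In r rows) v /\ v n <= 0.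
Proof.
  rewrite In_eliminate. intros [[Hv Hvn]|[p [q [[Hp Hpn] [[Hq Hqn] ->]]]]].
  - split; [apply posi_incl|]; assumption.
  - split; [|lra]. destruct (cone_posi (fun r => In r rows)) as [_ Hadd].
    apply Hadd; apply posi_scale_incl; (assumption || lra).
Qed.

Lemma eliminate_nil n rows : eliminate n rows = [] -> forall r, In r rows -> 0 < r n.
Proof.
  intros Hnil r Hr. apply Rnot_le_lt. intros Hrn.
  assert (Hin : In r (eliminate n rows)) by (apply In_eliminate; left; auto).
  rewrite Hnil in Hin. destruct Hin.
Qed.

(* The new coordinate [t] must lie above [-S p / p n] for the positive rows [p]
   and below [S q / - q n] for the negative rows [q]; the eliminated pairs say
   exactly that these bounds are compatible. *)
Lemma eliminate_extend n rows (u : nat -> R) :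
  (forall v, In v (eliminate n rows) -> 0 <= psum n (fun j => v j * u j)) ->
  exists t, 0 <= t /\ forall r, In r rows -> 0 <= psum n (fun j => r j * u j) + r n * t.
Proof.
  intros Hel. set (S r := psum n (fun j => r j * u j)).
  assert (Hpair : forall p q, In p rows -> 0 < p n -> In q rows -> q n < 0 ->
                  0 <= - q n * S p + p n * S q).
  { intros p q Hp Hpn Hq Hqn. unfold S. rewrite <- psum_lin.
    rewrite (psum_ext _ _ (fun j => (- q n * p j + p n * q j) * u j)) by (intros; ring).
    apply Hel, In_eliminate. right. exists p, q. auto. }
  set (P := filter (fun p => if Rlt_dec 0 (p n) then true else false) rows).
  exists (fold_right Rmax 0 (map (fun p => - S p / p n) P)).
  split; [apply fold_Rmax_nonneg|]. intros r Hr. fold (S r).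
  destruct (Rtotal_order (r n) 0) as [Hrn|[Hrn|Hrn]].
  - assert (HSr : 0 <= S r) by (apply Hel, In_eliminate; left; split; [auto|lra]).
    enough (fold_right Rmax 0 (map (fun p => - S p / p n) P) <= S r / - r n).
    { assert (r n * (S r / - r n) = - S r) by (field; lra). nra. }
    apply fold_Rmax_lub.
    + apply Rmult_le_pos; [lra|]. left; apply Rinv_0_lt_compat; lra.
    + intros x Hx. apply in_map_iff in Hx. destruct Hx as [p [<- Hp]].
      apply In_filter_dec in Hp. destruct Hp as [Hp Hpn].
      specialize (Hpair p r Hp Hpn Hr Hrn).
      apply (Rmult_le_reg_r (p n * - r n)); [nra|].
      replace (- S p / p n * (p n * - r n)) with (S p * r n) by (field; lra).
      replace (S r / - r n * (p n * - r n)) with (S r * p n) by (field; lra). lra.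
  - assert (HSr : 0 <= S r) by (apply Hel, In_eliminate; left; split; [auto|lra]).
    rewrite Hrn. lra.
  - assert (Hx : - S r / r n <= fold_right Rmax 0 (map (fun p => - S p / p n) P)).
    { apply fold_Rmax_ub, in_map_iff. exists r. split; [reflexivity|]. apply In_filter_dec; auto. }
    apply (Rmult_le_compat_l (r n)) in Hx; [|lra].
    replace (r n * (- S r / r n)) with (- S r) in Hx by (field; lra). lra.
Qed.

(* The sign form of von Neumann's minimax theorem for the matrix with the given rows
   and [n] columns: the value of the game is either nonpositive or nonnegative. *)
Lemma minimax_sign (n : nat) (rows : list (nat -> R)) :
  (exists v, posi (fun r => In r rows) v /\ forall j, (j < n)%nat -> v j <= 0) \/
  (exists u, (forall j, (j < n)%nat -> 0 <= u j) /\ (exists j, (j < n)%nat /\ 0 < u j) /\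
             forall r, In r rows -> 0 <= psum n (fun j => r j * u j)) \/
  (n = O /\ rows = []).
Proof.
  revert rows. induction n as [|n IH]; intros rows.
  - destruct rows as [|r rows]; [right; right; auto|].
    left. exists r. split; [apply posi_incl; left; reflexivity|intros; lia].
  - destruct (classic (eliminate n rows = [])) as [Hel|Hel].
    + right; left. exists (fun j => if Nat.ltb j n then 0 else 1). split; [|split].
      * intros j _. destruct (Nat.ltb j n); lra.
      * exists n. rewrite Nat.ltb_irrefl. split; [lia|lra].
      * intros r Hr. rewrite psum_extend, (psum_ext _ _ (fun _ => 0)), psum_zero by (intros; ring).
        pose proof (eliminate_nil n rows Hel r Hr). lra.
    + destruct (IH (eliminate n rows)) as [[w [Hw Hwle]]|[[u [Hu0 [Hupos Hu]]]|[_ Hnil]]].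
      * left. exists w. split.
        -- apply posi_posi. revert Hw. apply posi_mono.
           intros f Hf. apply (eliminate_posi n rows f Hf).
        -- intros j Hj. destruct (Nat.lt_ge_cases j n) as [Hjn|Hjn]; [auto|].
           replace j with n by lia. revert Hw. apply posi_nonpos_at.
           intros f Hf. apply (eliminate_posi n rows f Hf).
      * right; left. destruct (eliminate_extend n rows u Hu) as [t [Ht Hr]].
        exists (fun j => if Nat.ltb j n then u j else t). split; [|split].
        -- intros j Hj. destruct (Nat.ltb_spec j n); [apply Hu0|]; assumption.
        -- destruct Hupos as [j [Hj Huj]]. exists j.
           rewrite (proj2 (Nat.ltb_lt j n) Hj). split; [lia|assumption].
        -- intros r Hr'. rewrite psum_extend. auto.
      * contradiction.
Qed.

(** * Sums over the blocks cut out by finitely many events *)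

Lemma cone_psum {X} (K : gset X) n (u : nat -> R) (F : nat -> X -> R) :
  cone K -> (forall j, (j < n)%nat -> 0 <= u j /\ K (F j)) ->
  (exists j, (j < n)%nat /\ 0 < u j) -> K (fun x => psum n (fun j => u j * F j x)).
Proof.
  intros [Hscale Hadd]. induction n as [|n IH]; intros HF [j0 [Hj0 Hu0]]; [lia|].
  cbn [psum]. destruct (HF n ltac:(lia)) as [Hun HKn].
  destruct (classic (exists j, (j < n)%nat /\ 0 < u j)) as [Hpos|Hnone].
  - assert (Hrest : K (fun x => psum n (fun j => u j * F j x)))
      by (apply IH; [intros; apply HF; lia|exact Hpos]).
    destruct (Rle_lt_or_eq_dec 0 (u n) Hun) as [Hun'|<-].
    + apply (Hadd _ (fun x => u n * F n x)); [exact Hrest|]. apply Hscale; assumption.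
    + replace (fun x => _) with (fun x => psum n (fun j => u j * F j x)); [exact Hrest|].
      apply functional_extensionality; intros x; ring.
  - assert (Hzero : forall j, (j < n)%nat -> u j = 0).
    { intros j Hj. destruct (proj1 (HF j ltac:(lia))) as [Huj|Huj]; [|auto].
      exfalso; apply Hnone; eauto. }
    assert (j0 = n) as -> by (apply NNPP; intros Hj0n; apply Hnone; exists j0; split; [lia|auto]).
    replace (fun x => _) with (fun x => u n * F n x); [apply Hscale; assumption|].
    apply functional_extensionality; intros x.
    rewrite (psum_ext _ _ (fun _ => 0)), psum_zero; [ring|].
    intros j Hj. rewrite Hzero by exact Hj. ring.
Qed.

Lemma separating_constant {U V} (PU : U -> Prop) (PV : V -> Prop) (phi : U -> R) (psi : V -> R) :
  (exists u, PU u) -> (exists v, PV v) -> (forall u v, PU u -> PV v -> phi u + psi v <= 0) ->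
  exists m, (forall u, PU u -> phi u <= m) /\ (forall v, PV v -> psi v <= - m).
Proof.
  intros [u0 Hu0] [v0 Hv0] Hle.
  set (E y := exists u, PU u /\ y = phi u).
  assert (Hbound : bound E).
  { exists (- psi v0). intros y [u [Hu ->]]. specialize (Hle u v0 Hu Hv0). lra. }
  destruct (completeness E Hbound (ex_intro _ (phi u0) (ex_intro _ u0 (conj Hu0 eq_refl))))
    as [m [Hub Hlub]].
  exists m. split.
  - intros u Hu. apply Hub. exists u; auto.
  - intros v Hv. enough (m <= - psi v) by lra. apply Hlub.
    intros y [u [Hu ->]]. specialize (Hle u v Hu Hv). lra.
Qed.

Definition truth (P : Prop) : bool := if excluded_middle_informative P then true else false.

Lemma truth_spec (P : Prop) : truth P = true <-> P.
Proof. unfold truth. destruct (excluded_middle_informative P); intuition congruence. Qed.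

Definition indsum {A B : Type} (t : list ((B -> R) * (A -> Prop))) (a : A) (b : B) : R :=
  fold_right (fun p acc => fst p b * ind (snd p) a + acc) 0 t.

Definition pattern {A F : Type} (t : list (F * (A -> Prop))) (a : A) : list bool :=
  map (fun p => truth (snd p a)) t.

Fixpoint masked_sum {A B : Type} (r : list bool) (t : list ((B -> R) * (A -> Prop))) (b : B) : R :=
  match r, t with
  | s :: r', p :: t' => (if s then fst p b else 0) + masked_sum r' t' b
  | _, _ => 0
  end.

Lemma indsum_pattern {A B} (t : list ((B -> R) * (A -> Prop))) a b :
  indsum t a b = masked_sum (pattern t a) t b.
Proof.
  unfold indsum, pattern. induction t as [|p t IH]; [reflexivity|].
  cbn. rewrite IH. unfold ind, truth.
  destruct (excluded_middle_informative (snd p a)); cbn; ring.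
Qed.

Lemma masked_sum_cone {A B} (K : gset B) (t : list ((B -> R) * (A -> Prop))) r :
  cone K -> Forall (fun p => K (fst p)) t -> length r = length t ->
  (In true r -> K (masked_sum r t)) /\ (~ In true r -> forall b, masked_sum r t b = 0).
Proof.
  intros [Hscale Hadd]. revert t. induction r as [|s r IH]; intros [|p t] Ht Hlen; try discriminate.
  - split; [intros []|reflexivity].
  - inversion Ht as [|? ? Hp Ht']; subst. destruct (IH t Ht' ltac:(auto)) as [IHpos IHzero].
    cbn [masked_sum In]. destruct s; split.
    + intros _. destruct (in_dec Bool.bool_dec true r) as [Hr|Hr].
      * apply (Hadd (fst p)); auto.
      * replace (fun b => _) with (fst p); [exact Hp|].
        apply functional_extensionality; intros b. rewrite IHzero by exact Hr. ring.
    + intros Hr. exfalso. apply Hr. left. reflexivity.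
    + intros [Hr|Hr]; [discriminate|]. replace (fun b => _) with (masked_sum r t); [auto|].
      apply functional_extensionality; intros b. ring.
    + intros Hr b. rewrite IHzero by tauto. ring.
Qed.

Fixpoint all_patterns (n : nat) : list (list bool) :=
  match n with
  | O => [[]]
  | S k => map (cons true) (all_patterns k) ++ map (cons false) (all_patterns k)
  end.

Lemma In_all_patterns r : In r (all_patterns (length r)).
Proof.
  induction r as [|s r IH]; cbn; [left; reflexivity|]. apply in_or_app.
  destruct s; [left|right]; apply in_map; exact IH.
Qed.

Definition patterns {A F : Type} (t : list (F * (A -> Prop))) : list (list bool) :=
  filter (fun r => truth (In true r /\ exists a, pattern t a = r)) (all_patterns (length t)).

Lemma In_patterns {A F} (t : list (F * (A -> Prop))) r :
  In r (patterns t) <-> In true r /\ exists a, pattern t a = r.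
Proof.
  unfold patterns. rewrite filter_In, truth_spec. split; [tauto|].
  intros [Hr [a Ha]]. split; [|eauto]. rewrite <- Ha. unfold pattern at 1.
  rewrite <- (length_map (fun p => truth (snd p a)) t). apply In_all_patterns.
Qed.

Lemma pattern_cons {A F} (p : F * (A -> Prop)) t a :
  snd p a -> In (pattern (p :: t) a) (patterns (p :: t)).
Proof.
  intros Ha. apply In_patterns. split; [|eauto]. left. apply truth_spec, Ha.
Qed.

Section IndependentCombination.

Variables (A B : Type) (K1 : gset A) (K2 : gset B).
Hypotheses (cone1 : cone K1) (cone2 : cone K2) (pos1 : no_nonpos K1) (pos2 : no_nonpos K2).
Variables (t1 : list ((B -> R) * (A -> Prop))) (t2 : list ((A -> R) * (B -> Prop))).
Hypothesis Ht1 : Forall (fun p => K2 (fst p) /\ exists a, snd p a) t1.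
Hypothesis Ht2 : Forall (fun p => K1 (fst p) /\ exists b, snd p b) t2.
Hypothesis Hle : forall a b, indsum t1 a b + indsum t2 b a <= 0.

Lemma pattern_sums_nonpos a b :
  masked_sum (pattern t1 a) t1 b + masked_sum (pattern t2 b) t2 a <= 0.
Proof. rewrite <- !indsum_pattern. apply Hle. Qed.

Lemma row_sum_spec r :
  length r = length t1 -> (In true r -> K2 (masked_sum r t1)) /\
                          (~ In true r -> forall b, masked_sum r t1 b = 0).
Proof.
  apply masked_sum_cone; [exact cone2|]. eapply Forall_impl; [|exact Ht1]. now intros p [Hp _].
Qed.

Lemma col_sum_spec c :
  length c = length t2 -> (In true c -> K1 (masked_sum c t2)) /\
                          (~ In true c -> forall a, masked_sum c t2 a = 0).
Proof.
  apply masked_sum_cone; [exact cone1|]. eapply Forall_impl; [|exact Ht2]. now intros p [Hp _].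
Qed.

Lemma row_sum_nonpos r b :
  In r (patterns t1) -> ~ In true (pattern t2 b) -> masked_sum r t1 b <= 0.
Proof.
  intros Hr Hb. apply In_patterns in Hr as [_ [a <-]].
  pose proof (pattern_sums_nonpos a b) as Hab.
  rewrite (proj2 (col_sum_spec _ (length_map _ _)) Hb) in Hab. lra.
Qed.

Lemma col_sum_nonpos c a :
  In c (patterns t2) -> ~ In true (pattern t1 a) -> masked_sum c t2 a <= 0.
Proof.
  intros Hc Ha. apply In_patterns in Hc as [_ [b <-]].
  pose proof (pattern_sums_nonpos a b) as Hab.
  rewrite (proj2 (row_sum_spec _ (length_map _ _)) Ha) in Hab. lra.
Qed.

Lemma block_bounds_exist :
  exists m : list bool -> list bool -> R, forall r c, In r (patterns t1) -> In c (patterns t2) ->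
    (forall b, pattern t2 b = c -> masked_sum r t1 b <= m r c) /\
    (forall a, pattern t1 a = r -> masked_sum c t2 a <= - m r c).
Proof.
  destruct (ClassicalEpsilon.choice (fun (rc : list bool * list bool) (y : R) =>
      In (fst rc) (patterns t1) -> In (snd rc) (patterns t2) ->
      (forall b, pattern t2 b = snd rc -> masked_sum (fst rc) t1 b <= y) /\
      (forall a, pattern t1 a = fst rc -> masked_sum (snd rc) t2 a <= - y))) as [m Hm].
  - intros [r c]. cbn.
    destruct (classic (In r (patterns t1) /\ In c (patterns t2))) as [[Hr Hc]|Hrc];
      [|exists 0; tauto].
    destruct (separating_constant (fun b => pattern t2 b = c) (fun a => pattern t1 a = r)
                (masked_sum r t1) (masked_sum c t2)) as [y Hy].
    + apply In_patterns in Hc. tauto.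
    + apply In_patterns in Hr. tauto.
    + intros b a <- <-. apply pattern_sums_nonpos.
    + exists y. auto.
  - exists (fun r c => m (r, c)). intros r c. exact (Hm (r, c)).
Qed.

Section BlockBounds.

Variable m : list bool -> list bool -> R.
Hypothesis Hm : forall r c, In r (patterns t1) -> In c (patterns t2) ->
    (forall b, pattern t2 b = c -> masked_sum r t1 b <= m r c) /\
    (forall a, pattern t1 a = r -> masked_sum c t2 a <= - m r c).

Definition block_row (r : list bool) (j : nat) : R := m r (nth j (patterns t2) []).

Lemma no_nonpos_row_combination :
  ~ exists v, posi (fun f => In f (map block_row (patterns t1))) v /\
              forall j, (j < length (patterns t2))%nat -> v j <= 0.
Proof.
  intros [v [Hv Hvle]].
  assert (HL : exists L, K2 L /\
    (forall b j, (j < length (patterns t2))%nat ->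
                 nth j (patterns t2) [] = pattern t2 b -> L b <= v j) /\
    (forall b, ~ In true (pattern t2 b) -> L b <= 0)).
  { clear Hvle. revert v Hv. apply posi_ind.
    - intros f lam Hf Hlam. apply in_map_iff in Hf as [r [<- Hr]].
      exists (fun b => lam * masked_sum r t1 b). split; [|split].
      + apply (proj1 cone2); [|exact Hlam]. apply In_patterns in Hr as [Hr [a <-]].
        apply (row_sum_spec _ (length_map _ _)), Hr.
      + intros b j Hj Hc. apply Rmult_le_compat_l; [lra|]. unfold block_row.
        apply (Hm r _ Hr (nth_In _ _ Hj)). auto.
      + intros b Hb. pose proof (row_sum_nonpos r b Hr Hb). nra.
    - intros f g [L1 [HL1 [Hc1 Hz1]]] [L2 [HL2 [Hc2 Hz2]]].
      exists (fun b => L1 b + L2 b). split; [apply (proj2 cone2); assumption|split].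
      + intros b j Hj Hc. specialize (Hc1 b j Hj Hc). specialize (Hc2 b j Hj Hc). lra.
      + intros b Hb. specialize (Hz1 b Hb). specialize (Hz2 b Hb). lra. }
  destruct HL as [L [HL [Hcol Hzero]]]. apply (pos2 L HL). intros b.
  destruct (in_dec Bool.bool_dec true (pattern t2 b)) as [Hb|Hb]; [|auto].
  assert (Hc : In (pattern t2 b) (patterns t2)) by (apply In_patterns; eauto).
  destruct (In_nth _ _ [] Hc) as [j [Hj Hnth]].
  specialize (Hcol b j Hj Hnth). specialize (Hvle j Hj). lra.
Qed.

Lemma no_column_weights :
  ~ exists u, (forall j, (j < length (patterns t2))%nat -> 0 <= u j) /\
              (exists j, (j < length (patterns t2))%nat /\ 0 < u j) /\
              forall f, In f (map block_row (patterns t1)) ->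
                0 <= psum (length (patterns t2)) (fun j => f j * u j).
Proof.
  intros [u [Hu0 [Hupos Hu]]]. set (n := length (patterns t2)) in *.
  assert (Hcols : forall j, (j < n)%nat -> In (nth j (patterns t2) []) (patterns t2))
    by (intros; apply nth_In; assumption).
  apply (pos1 (fun a => psum n (fun j => u j * masked_sum (nth j (patterns t2) []) t2 a))).
  - apply cone_psum; [exact cone1| |exact Hupos]. intros j Hj. split; [auto|].
    specialize (Hcols j Hj). apply In_patterns in Hcols as [Hc [b Hb]].
    rewrite <- Hb in Hc |- *. apply (col_sum_spec _ (length_map _ _)), Hc.
  - intros a. destruct (in_dec Bool.bool_dec true (pattern t1 a)) as [Ha|Ha].
    + assert (Hr : In (pattern t1 a) (patterns t1)) by (apply In_patterns; eauto).
      specialize (Hu _ (in_map block_row _ _ Hr)).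
      enough (psum n (fun j => u j * masked_sum (nth j (patterns t2) []) t2 a)
              <= psum n (fun j => - (block_row (pattern t1 a) j * u j)))
        by (rewrite psum_opp in *; lra).
      apply psum_le. intros j Hj. unfold block_row.
      destruct (Hm _ _ Hr (Hcols j Hj)) as [_ Hbound].
      specialize (Hbound a eq_refl). specialize (Hu0 j Hj). nra.
    + rewrite <- (psum_zero n). apply psum_le. intros j Hj.
      pose proof (col_sum_nonpos _ a (Hcols j Hj) Ha). specialize (Hu0 j Hj). nra.
Qed.

End BlockBounds.

Lemma indsums_nonpos_nil : t1 = [] /\ t2 = [].
Proof.
  destruct block_bounds_exist as [m Hm].
  destruct (minimax_sign (length (patterns t2)) (map (block_row m) (patterns t1)))
    as [Hrow|[Hcol|[Hn Hrows]]].
  - exfalso. exact (no_nonpos_row_combination m Hm Hrow).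
  - exfalso. exact (no_column_weights m Hm Hcol).
  - apply map_eq_nil in Hrows. apply length_zero_iff_nil in Hn. split.
    + destruct t1 as [|p t]; [reflexivity|]. inversion Ht1 as [|? ? [_ [a Ha]] _].
      pose proof (pattern_cons p t a Ha). rewrite Hrows in *. contradiction.
    + destruct t2 as [|p t]; [reflexivity|]. inversion Ht2 as [|? ? [_ [b Hb]] _].
      pose proof (pattern_cons p t b Hb). rewrite Hn in *. contradiction.
Qed.

End IndependentCombination.

Lemma gamble_const {X} (c : R) : @gamble X (fun _ => c).
Proof. exists (Rabs c). intros; lra. Qed.

Lemma gamble_scale {X} (c : R) (f : X -> R) : gamble f -> gamble (fun x => c * f x).
Proof.
  intros [M HM]. exists (Rabs c * M). intros x. rewrite Rabs_mult.
  apply Rmult_le_compat_l; [apply Rabs_pos|apply HM].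
Qed.

Lemma gamble_add {X} (f g : X -> R) : gamble f -> gamble g -> gamble (fun x => f x + g x).
Proof.
  intros [M HM] [N HN]. exists (M + N). intros x.
  eapply Rle_trans; [apply Rabs_triang|]. apply Rplus_le_compat; auto.
Qed.

Lemma ind_bounds {X} (B : X -> Prop) x : 0 <= ind B x <= 1.
Proof. unfold ind. destruct (excluded_middle_informative (B x)); lra. Qed.

Lemma gamble_mul_ind {X} (f : X -> R) (B : X -> Prop) : gamble f -> gamble (fun x => f x * ind B x).
Proof.
  intros [M HM]. exists M. intros x. rewrite Rabs_mult.
  pose proof (ind_bounds B x). rewrite (Rabs_right (ind B x)) by lra.
  pose proof (Rabs_pos (f x)). specialize (HM x). nra.
Qed.

Lemma gamble_cond {X} (f : X -> R) (B : X -> Prop) mu :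
  gamble f -> gamble (fun x => (f x - mu) * ind B x).
Proof. intros Hf. apply gamble_mul_ind, gamble_add; [exact Hf|apply gamble_const]. Qed.

Lemma ind_prod {X1 X2} (Bz : X1 * X2 -> Prop) (B1 : X1 -> Prop) (B2 : X2 -> Prop) z :
  (Bz z <-> B1 (fst z) /\ B2 (snd z)) -> ind Bz z = ind B1 (fst z) * ind B2 (snd z).
Proof.
  unfold ind. intros HBz.
  destruct (excluded_middle_informative (Bz z)), (excluded_middle_informative (B1 (fst z))),
    (excluded_middle_informative (B2 (snd z))); try ring; tauto.
Qed.

Section CoherentSets.

Variables (X : Type) (D : gset X).
Hypothesis HD : coherent_D D.

Lemma coherent_D_cone : cone D.
Proof. destruct HD as [_ [_ [Hscale [Hadd _]]]]. split; assumption. Qed.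

Lemma coherent_D_no_nonpos : no_nonpos D.
Proof. destruct HD as [_ [_ [_ [_ Hnp]]]]. intros f Hf Hle. exact (Hnp f Hle Hf). Qed.

Lemma coherent_D_add_nonneg f g :
  D f -> gamble g -> (forall x, 0 <= g x) -> D (fun x => f x + g x).
Proof.
  destruct HD as [_ [Hpos [_ [Hadd _]]]]. intros Hf Hg Hg0.
  destruct (classic (exists x, g x <> 0)) as [Hnz|Hz].
  - apply Hadd; [exact Hf|]. apply Hpos; assumption.
  - replace (fun x => f x + g x) with f; [exact Hf|].
    apply functional_extensionality. intros x. apply NNPP. intros Hx.
    apply Hz. exists x. lra.
Qed.

End CoherentSets.

Lemma coherent_Eext {X} (A D : gset X) :
  coherent_D D -> (forall f, A f -> D f) -> (forall f, A f -> gamble f) -> coherent_D (Eext A).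
Proof.
  intros HD HAD HAg. pose proof HD as [_ [Hpos _]].
  assert (Hgen : forall f, A f \/ Gpos f -> D f /\ gamble f).
  { intros f [Hf|[Hg [Hf0 Hfnz]]]; [auto|]. split; [apply Hpos|]; assumption. }
  split; [|split; [|split; [|split]]].
  - apply posi_ind.
    + intros f lam Hf _. apply gamble_scale, (Hgen f Hf).
    + intros f g. apply gamble_add.
  - intros f Hg Hf0 Hfnz. apply posi_incl. right. repeat split; assumption.
  - apply (cone_posi _).
  - apply (cone_posi _).
  - intros f Hle Hf. apply (coherent_D_no_nonpos X D HD f); [|exact Hle].
    apply (cone_posi_incl D (coherent_D_cone X D HD)).
    apply (posi_mono _ D) in Hf; [exact Hf|]. intros g Hg. apply (Hgen g Hg).
Qed.

Lemma LP_D_gt {X} (D : gset X) f B (mu : R) :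
  Rbar_lt mu (LP_D D f B) -> exists mu', mu < mu' /\ D (fun x => (f x - mu') * ind B x).
Proof.
  intros Hlt. apply NNPP. intros Hnone.
  assert (Hub : is_ub_Rbar (fun mu' => D (fun x => (f x - mu') * ind B x)) mu).
  { intros mu' Hmu'. cbn. apply Rnot_lt_le. intros Hmu. apply Hnone. eauto. }
  apply (Rbar_lt_not_le _ _ Hlt), (proj2 (Lub_Rbar_correct _)), Hub.
Qed.

Lemma coherent_EP {X} (C : domain X) (P : lprev X) :
  in_CX C -> coherent_P C P -> coherent_D (EP C P).
Proof.
  intros HC [D [HD HPD]]. apply (coherent_Eext _ D HD).
  - intros g [f [B [mu [HfB [Hlt Hg]]]]].
    replace g with (fun x => (f x - mu) * ind B x)
      by (symmetry; apply functional_extensionality, Hg).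
    rewrite (HPD f B HfB) in Hlt.
    destruct (LP_D_gt D f B mu Hlt) as [mu' [Hmu Hmu']].
    replace (fun x => (f x - mu) * ind B x)
      with (fun x => (f x - mu') * ind B x + (mu' - mu) * ind B x)
      by (apply functional_extensionality; intros; ring).
    apply (coherent_D_add_nonneg _ _ HD); [exact Hmu'| |].
    + apply gamble_mul_ind, gamble_const.
    + intros x. pose proof (ind_bounds B x). nra.
  - intros g [f [B [mu [HfB [_ Hg]]]]].
    replace g with (fun x => (f x - mu) * ind B x)
      by (symmetry; apply functional_extensionality, Hg).
    apply gamble_cond, (HC f B HfB).
Qed.

Section AddingNegation.

Variables (X : Type) (D : gset X) (h : X -> R).
Hypotheses (HD : coherent_D D) (Hh : gamble h) (HhD : ~ D h).

Let Dh : gset X := fun f => D f \/ f = (fun x => - h x).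

Lemma posi_add_neg_shape g :
  posi Dh g -> exists c, 0 <= c /\
    (D (fun x => g x + c * h x) \/ (0 < c /\ forall x, g x + c * h x = 0)).
Proof.
  destruct (coherent_D_cone X D HD) as [Hscale Hadd]. revert g. apply posi_ind.
  - intros f lam [Hf| ->] Hlam.
    + exists 0. split; [lra|left]. replace (fun x => _) with (fun x => lam * f x); [auto|].
      apply functional_extensionality; intros; ring.
    + exists lam. split; [lra|right]. split; [exact Hlam|intros; ring].
  - intros f g [c1 [Hc1 Hf]] [c2 [Hc2 Hg]]. exists (c1 + c2). split; [lra|].
    destruct Hf as [Hf|[Hc1p Hf]], Hg as [Hg|[Hc2p Hg]].
    + left. replace (fun x => _) with (fun x => (f x + c1 * h x) + (g x + c2 * h x)); [auto|].
      apply functional_extensionality; intros; ring.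
    + left. replace (fun x => _) with (fun x => f x + c1 * h x); [auto|].
      apply functional_extensionality; intros x; specialize (Hg x); lra.
    + left. replace (fun x => _) with (fun x => g x + c2 * h x); [auto|].
      apply functional_extensionality; intros x; specialize (Hf x); lra.
    + right. split; [lra|]. intros x; specialize (Hf x); specialize (Hg x); lra.
Qed.

Lemma no_nonpos_posi_add_neg : (exists x, h x <> 0) -> no_nonpos (posi Dh).
Proof.
  pose proof HD as [HDg [Hpos [Hscale _]]]. intros Hhnz g Hg Hle.
  destruct (posi_add_neg_shape g Hg) as [c [Hc [Hd|[Hcp Hz]]]].
  - destruct (Rle_lt_or_eq_dec 0 c Hc) as [Hcp|<-].
    + (* [c h = d - g] with [d] in [D] and [- g >= 0], so [h] itself would be in [D]. *)
      apply HhD.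
      replace h with (fun x => / c * ((g x + c * h x) + - g x))
        by (apply functional_extensionality; intros; field; lra).
      apply Hscale; [|apply Rinv_0_lt_compat, Hcp].
      apply (coherent_D_add_nonneg _ _ HD); [exact Hd| |intros x; specialize (Hle x); lra].
      replace (fun x => - g x) with (fun x => -1 * (g x + c * h x) + c * h x)
        by (apply functional_extensionality; intros; ring).
      apply gamble_add; apply gamble_scale; [apply HDg, Hd|exact Hh].
    + apply (coherent_D_no_nonpos X D HD _ Hd). intros x. specialize (Hle x). lra.
  - apply HhD, Hpos; [exact Hh| |exact Hhnz].
    intros x. specialize (Hle x). specialize (Hz x). nra.
Qed.

End AddingNegation.

(** * The independent product *)

Lemma indsum_app {A B} (t t' : list ((B -> R) * (A -> Prop))) a b :
  indsum (t ++ t') a b = indsum t a b + indsum t' a b.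
Proof. unfold indsum. induction t as [|p t IH]; cbn; [ring|]. rewrite IH; ring. Qed.

Section Product.

Variables (X1 X2 : Type) (x1 : X1) (x2 : X2).
Variables (Bs1 : (X1 -> Prop) -> Prop) (Bs2 : (X2 -> Prop) -> Prop).
Hypotheses (HB1 : forall B, Bs1 B -> exists x, B x) (HB2 : forall B, Bs2 B -> exists y, B y).
Variables (D1 : gset X1) (D2 : gset X2).
Hypotheses (HD1 : coherent_D D1) (HD2 : coherent_D D2).

Definition product_decomposition (g : X1 * X2 -> R) : Prop :=
  exists t1 t2 (p : X1 * X2 -> R),
    Forall (fun q => D2 (fst q) /\ exists a, snd q a) t1 /\
    Forall (fun q => D1 (fst q) /\ exists b, snd q b) t2 /\
    (forall z, 0 <= p z) /\ (t1 = [] -> t2 = [] -> exists z, p z <> 0) /\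
    forall z, g z = indsum t1 (fst z) (snd z) + indsum t2 (snd z) (fst z) + p z.

Lemma product_decomposition_add f g :
  product_decomposition f -> product_decomposition g ->
  product_decomposition (fun z => f z + g z).
Proof.
  intros [t1 [t2 [p [Ht1 [Ht2 [Hp0 [Hpnz Hf]]]]]]] [t1' [t2' [p' [Ht1' [Ht2' [Hp0' [_ Hg]]]]]]].
  exists (t1 ++ t1'), (t2 ++ t2'), (fun z => p z + p' z). split; [|split; [|split; [|split]]].
  - apply Forall_app; auto.
  - apply Forall_app; auto.
  - intros z. specialize (Hp0 z). specialize (Hp0' z). lra.
  - intros H1 H2. apply app_eq_nil in H1 as [-> ->]. apply app_eq_nil in H2 as [-> ->].
    destruct (Hpnz eq_refl eq_refl) as [z Hz]. exists z.
    specialize (Hp0 z). specialize (Hp0' z). lra.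
  - intros z. rewrite Hf, Hg, !indsum_app. ring.
Qed.

Lemma prodD_decompose g : prodD Bs1 Bs2 D1 D2 g -> product_decomposition g.
Proof.
  revert g. apply posi_ind; [|exact product_decomposition_add].
  intros f lam Hf Hlam.
  destruct Hf as [[[f2 [B1 [Hf2 [HB Hf]]]]|[f1 [B2 [Hf1 [HB Hf]]]]]|[_ [Hf0 [z Hz]]]].
  - exists [((fun y => lam * f2 y), B1)], [], (fun _ => 0). split; [|split; [|split; [|split]]].
    + constructor; [|constructor]. split; [apply (coherent_D_cone _ _ HD2); assumption|].
      destruct HB as [HB|HB]; [apply HB1, HB|exists x1; apply HB].
    + constructor.
    + intros; lra.
    + discriminate.
    + intros z. rewrite Hf. cbn. ring.
  - exists [], [((fun x => lam * f1 x), B2)], (fun _ => 0). split; [|split; [|split; [|split]]].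
    + constructor.
    + constructor; [|constructor]. split; [apply (coherent_D_cone _ _ HD1); assumption|].
      destruct HB as [HB|HB]; [apply HB2, HB|exists x2; apply HB].
    + intros; lra.
    + discriminate.
    + intros z. rewrite Hf. cbn. ring.
  - exists [], [], (fun z => lam * f z). split; [|split; [|split; [|split]]].
    + constructor.
    + constructor.
    + intros z'. specialize (Hf0 z'). nra.
    + intros _ _. exists z. intros H0. apply Rmult_integral in H0 as [H0|H0]; lra.
    + intros z'. cbn. ring.
Qed.

Lemma prodD_no_nonpos : no_nonpos (prodD Bs1 Bs2 D1 D2).
Proof.
  intros g Hg Hle.
  destruct (prodD_decompose g Hg) as [t1 [t2 [p [Ht1 [Ht2 [Hp0 [Hpnz Hgz]]]]]]].
  destruct (indsums_nonpos_nil X1 X2 D1 D2 (coherent_D_cone _ _ HD1) (coherent_D_cone _ _ HD2)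
              (coherent_D_no_nonpos _ _ HD1) (coherent_D_no_nonpos _ _ HD2) t1 t2 Ht1 Ht2)
    as [-> ->].
  - intros a b. specialize (Hgz (a, b)). specialize (Hle (a, b)). specialize (Hp0 (a, b)).
    cbn in *. lra.
  - destruct (Hpnz eq_refl eq_refl) as [z Hz]. specialize (Hgz z). specialize (Hle z).
    specialize (Hp0 z). cbn in Hgz. lra.
Qed.

Lemma prodD_cylinder_left (h : X1 -> R) (E : X2 -> Prop) :
  gamble h -> (Bs2 E \/ forall y, E y) ->
  (prodD Bs1 Bs2 D1 D2 (fun z => h (fst z) * ind E (snd z)) <-> D1 h).
Proof.
  intros Hh HE. split.
  - intros Hprod. apply NNPP. intros HhD.
    destruct (classic (exists x, h x <> 0)) as [Hhnz|Hh0].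
    + destruct (prodD_decompose _ Hprod) as [t1 [t2 [p [Ht1 [Ht2 [Hp0 [_ Hgz]]]]]]].
      assert (HEne : exists y, E y)
        by (destruct HE as [HE|HE]; [apply HB2, HE|exists x2; apply HE]).
      set (K1 := posi (fun f => D1 f \/ f = (fun x => - h x))).
      assert (HK1 : forall f, D1 f -> K1 f) by (intros f Hf; apply posi_incl; left; exact Hf).
      destruct (indsums_nonpos_nil X1 X2 K1 D2 (cone_posi _) (coherent_D_cone _ _ HD2)
                  (no_nonpos_posi_add_neg X1 D1 h HD1 Hh HhD Hhnz) (coherent_D_no_nonpos _ _ HD2)
                  t1 (((fun x => - h x), E) :: t2) Ht1) as [_ Hnil]; [| |discriminate].
      * constructor; [split; [apply posi_incl; right; reflexivity|exact HEne]|].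
        eapply Forall_impl; [|exact Ht2]. intros q [Hq Hqb]. split; [apply HK1|]; assumption.
      * intros a b. specialize (Hgz (a, b)). specialize (Hp0 (a, b)).
        unfold indsum in *. cbn in *. lra.
    + apply (prodD_no_nonpos _ Hprod). intros z. cbn.
      replace (h (fst z)) with 0; [lra|]. apply NNPP. intros Hz. apply Hh0. exists (fst z). auto.
  - intros Hh1. apply posi_incl. left. right. exists h, E. auto.
Qed.

End Product.

Lemma prodD_swap {X1 X2} Bs1 Bs2 (D1 : gset X1) (D2 : gset X2) g :
  prodD Bs1 Bs2 D1 D2 g -> prodD Bs2 Bs1 D2 D1 (fun z => g (snd z, fst z)).
Proof.
  revert g. apply posi_ind; [|intros f g; apply (cone_posi _)].
  intros f lam Hf Hlam. apply posi_scale_incl; [|exact Hlam].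
  destruct Hf as [[[f2 [B1 [Hf2 [HB Hf]]]]|[f1 [B2 [Hf1 [HB Hf]]]]]|[Hg [Hf0 [[a b] Hz]]]].
  - left. right. exists f2, B1. split; [|split]; auto.
  - left. left. exists f1, B2. split; [|split]; auto.
  - right. split; [|split].
    + destruct Hg as [M HM]. exists M. auto.
    + auto.
    + exists (b, a). exact Hz.
Qed.

Lemma prodD_cylinder_right {X1 X2} (x1 : X1) (x2 : X2) Bs1 Bs2
  (HB1 : forall B, Bs1 B -> exists x, B x) (HB2 : forall B, Bs2 B -> exists y, B y)
  (D1 : gset X1) (D2 : gset X2) (HD1 : coherent_D D1) (HD2 : coherent_D D2)
  (h : X2 -> R) (E : X1 -> Prop) :
  gamble h -> (Bs1 E \/ forall x, E x) ->
  (prodD Bs1 Bs2 D1 D2 (fun z => h (snd z) * ind E (fst z)) <-> D2 h).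
Proof.
  intros Hh HE. split.
  - intros Hprod. apply (prodD_cylinder_left X2 X1 x2 x1 Bs2 Bs1 HB2 HB1 D2 D1 HD2 HD1 h E Hh HE).
    exact (prodD_swap _ _ _ _ _ Hprod).
  - intros Hh2. apply posi_incl. left. left. exists h, E. auto.
Qed.

Lemma LP_D_eq {X Y} (D : gset X) (D' : gset Y) f B f' B' :
  (forall mu : R, D (fun x => (f x - mu) * ind B x) <-> D' (fun y => (f' y - mu) * ind B' y)) ->
  LP_D D f B = LP_D D' f' B'.
Proof.
  intros H. unfold LP_D. f_equal. apply functional_extensionality. intros mu.
  apply propositional_extensionality, H.
Qed.

Section ProductMarginals.

Variables (X1 X2 : Type) (x1 : X1) (x2 : X2).
Variables (Bs1 : (X1 -> Prop) -> Prop) (Bs2 : (X2 -> Prop) -> Prop).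
Hypotheses (HB1 : forall B, Bs1 B -> exists x, B x) (HB2 : forall B, Bs2 B -> exists y, B y).
Variables (D1 : gset X1) (D2 : gset X2).
Hypotheses (HD1 : coherent_D D1) (HD2 : coherent_D D2).

Lemma LP_D_prodD_left f B1 E (Bz : X1 * X2 -> Prop) :
  gamble f -> (Bs2 E \/ forall y, E y) -> (forall z, Bz z <-> B1 (fst z) /\ E (snd z)) ->
  LP_D (prodD Bs1 Bs2 D1 D2) (fun z => f (fst z)) Bz = LP_D D1 f B1.
Proof.
  intros Hf HE HBz. apply LP_D_eq. intros mu.
  rewrite <- (prodD_cylinder_left X1 X2 x1 x2 Bs1 Bs2 HB1 HB2 D1 D2 HD1 HD2
                (fun x => (f x - mu) * ind B1 x) E (gamble_cond f B1 mu Hf) HE).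
  replace (fun z => (f (fst z) - mu) * ind Bz z)
    with (fun z => (f (fst z) - mu) * ind B1 (fst z) * ind E (snd z)); [reflexivity|].
  apply functional_extensionality. intros z. rewrite (ind_prod Bz B1 E z (HBz z)). ring.
Qed.

Lemma LP_D_prodD_right f B2 E (Bz : X1 * X2 -> Prop) :
  gamble f -> (Bs1 E \/ forall x, E x) -> (forall z, Bz z <-> E (fst z) /\ B2 (snd z)) ->
  LP_D (prodD Bs1 Bs2 D1 D2) (fun z => f (snd z)) Bz = LP_D D2 f B2.
Proof.
  intros Hf HE HBz. apply LP_D_eq. intros mu.
  rewrite <- (prodD_cylinder_right x1 x2 Bs1 Bs2 HB1 HB2 D1 D2 HD1 HD2
                (fun y => (f y - mu) * ind B2 y) E (gamble_cond f B2 mu Hf) HE).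
  replace (fun z => (f (snd z) - mu) * ind Bz z)
    with (fun z => (f (snd z) - mu) * ind B2 (snd z) * ind E (fst z)); [reflexivity|].
  apply functional_extensionality. intros z. rewrite (ind_prod Bz E B2 z (HBz z)). ring.
Qed.

End ProductMarginals.

Theorem proposition43
  (X1 X2 : Type) (x1 : X1) (x2 : X2)
  (Bs1 : (X1 -> Prop) -> Prop) (Bs2 : (X2 -> Prop) -> Prop)
  (HB1 : forall B, Bs1 B -> exists x, B x)
  (HB2 : forall B, Bs2 B -> exists y, B y)
  (C1 : domain X1) (P1 : lprev X1) (C2 : domain X2) (P2 : lprev X2)
  (HC1 : in_CX C1) (HC2 : in_CX C2)
  (HP1 : coherent_P C1 P1) (HP2 : coherent_P C2 P2) :
  (* case i = 1, j = 2 *)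
  (forall (f1 : X1 -> R) (B1 : X1 -> Prop) (B2 : X2 -> Prop),
     gamble f1 -> (exists x, B1 x) -> Bs2 B2 ->
     prodP Bs1 Bs2 C1 P1 C2 P2 (fun z => f1 (fst z)) (fun z => B1 (fst z) /\ B2 (snd z))
       = prodP Bs1 Bs2 C1 P1 C2 P2 (fun z => f1 (fst z)) (fun z => B1 (fst z)) /\
     prodP Bs1 Bs2 C1 P1 C2 P2 (fun z => f1 (fst z)) (fun z => B1 (fst z))
       = natext C1 P1 f1 B1) /\
  (* case i = 2, j = 1 *)
  (forall (f2 : X2 -> R) (B2 : X2 -> Prop) (B1 : X1 -> Prop),
     gamble f2 -> (exists y, B2 y) -> Bs1 B1 ->
     prodP Bs1 Bs2 C1 P1 C2 P2 (fun z => f2 (snd z)) (fun z => B1 (fst z) /\ B2 (snd z))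
       = prodP Bs1 Bs2 C1 P1 C2 P2 (fun z => f2 (snd z)) (fun z => B2 (snd z)) /\
     prodP Bs1 Bs2 C1 P1 C2 P2 (fun z => f2 (snd z)) (fun z => B2 (snd z))
       = natext C2 P2 f2 B2).
Proof.
  pose proof (coherent_EP C1 P1 HC1 HP1) as HD1.
  pose proof (coherent_EP C2 P2 HC2 HP2) as HD2.
  unfold prodP, natext. split.
  - intros f1 B1 B2 Hf1 _ HB2in.
    pose proof (LP_D_prodD_left X1 X2 x1 x2 Bs1 Bs2 HB1 HB2 _ _ HD1 HD2 f1 B1) as Hmarg.
    rewrite (Hmarg B2), (Hmarg (fun _ => True)) by tauto. split; reflexivity.
  - intros f2 B2 B1 Hf2 _ HB1in.
    pose proof (LP_D_prodD_right X1 X2 x1 x2 Bs1 Bs2 HB1 HB2 _ _ HD1 HD2 f2 B2) as Hmarg.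
    rewrite (Hmarg B1), (Hmarg (fun _ => True)) by tauto. split; reflexivity.
Qed.
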